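(* Let $\mathcal M$ be a universally ex-post IC-IR single-item mechanism in an interdependent-values setting. Then under no-overbidding $\mathcal M$ is dominant-strategy incentive compatible: for every signal profile $\mathbf s$, every bid profile $\mathbf b$ with $\mathbf b\le\mathbf s$ coordinatewise, and every bidder $i$, $$\mathbb E\big[u_i((s_i,\mathbf b_{-i});\mathbf s)\big]\ge\mathbb E\big[u_i(\mathbf b;\mathbf s)\big],$$ where expectations are over the randomness of $\mathcal M$.
   Context: Single-item interdependent-values setting: bidders $i\in[n]$ have private signals $s_i\in S_i\subseteq\mathbb R_{\ge0}$ (intervals) and publicly known valuations $v_i:S_1\times\dots\times S_n\to\mathbb R_{\ge0}$, weakly increasing in every coordinate and strictly increasing in $s_i$. A deterministic mechanism $(x,p)$ solicits bids $b_i\in S_i$, outputs $x_i(\mathbf b)\in\{0,1\}$ with $\sum_ix_i(\mathbf b)\le1$ and payments $p_i(\mathbf b)$; utility $u_i(\mathbf b;\mathbf s)=x_i(\mathbf b)v_i(\mathbf s)-p_i(\mathbf b)$. It is ex-post IC-IR if for every $\mathbf s$, every $i$ and every $b_i\in S_i$: $x_i(\mathbf s)v_i(\mathbf s)-p_i(\mathbf s)\ge\max\{x_i(b_i,\mathbf s_{-i})v_i(\mathbf s)-p_i(b_i,\mathbf s_{-i}),0\}$. A randomized mechanism is universally ex-post IC-IR if it is a probability distribution over deterministic ex-post IC-IR mechanisms. *)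

From HB Require Import structures.
From mathcomp Require Import all_boot all_order all_algebra.
From mathcomp Require Import all_classical all_reals all_analysis.
Set Implicit Arguments. Unset Strict Implicit. Unset Printing Implicit Defensive.
Import Order.TTheory GRing.Theory Num.Theory.
Local Open Scope ring_scope.
Local Open Scope classical_set_scope.

Section Auction.
Variables (R : realType) (n : nat).

Definition profile := 'I_n -> R.

Definition upd (s : profile) (i : 'I_n) (c : R) : profile :=
  fun j => if j == i then c else s j.

Definition signal_spaces (S : 'I_n -> set R) : Prop :=
  forall i, is_interval (S i) /\ S i `<=` [set x | 0 <= x].

Definition in_prof (S : 'I_n -> set R) (s : profile) : Prop := forall i, S i (s i).

Definition valuations (S : 'I_n -> set R) (v : 'I_n -> profile -> R) : Prop :=
  forall i, forall s, in_prof S s ->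
    [/\ 0 <= v i s,
        (forall j c, S j c -> s j <= c -> v i s <= v i (upd s j c)) &
        (forall c, S i c -> s i < c -> v i s < v i (upd s i c))].

Record mechanism := Mechanism {
  alloc : 'I_n -> profile -> bool;
  pay : 'I_n -> profile -> R }.

Definition utility (v : 'I_n -> profile -> R) (M : mechanism)
  (i : 'I_n) (b s : profile) : R :=
  (alloc M i b)%:R * v i s - pay M i b.

Definition feasible (S : 'I_n -> set R) (M : mechanism) : Prop :=
  forall b, in_prof S b -> (\sum_(i < n) (alloc M i b : nat) <= 1)%N.

Definition expost_IC_IR (S : 'I_n -> set R) (v : 'I_n -> profile -> R)
  (M : mechanism) : Prop :=
  forall s, in_prof S s -> forall i bi, S i bi ->
    Num.max (utility v M i (upd s i bi) s) 0 <= utility v M i s s.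

End Auction.

(** For a deterministic ex-post IC-IR mechanism, compare the bid profile b
    with b' = (s_i, b_{-i}), where s_i >= b_i.  Ex-post IC at the signal
    profile b' against the deviation b_i, and at the signal profile b against
    the deviation s_i, combined with v_i(b) < v_i(b') <= v_i(s), show that
    bidding s_i wins whenever bidding b_i does, and then at a payment no
    higher.  Hence u_i(b'; s) >= u_i(b; s) for every mechanism in the support,
    and integrating over the randomness gives the claim. *)
From HB Require Import structures.
From mathcomp Require Import all_boot all_order all_algebra.
From mathcomp Require Import all_classical all_reals all_analysis.
From mathcomp Require Import lra.
Set Implicit Arguments. Unset Strict Implicit. Unset Printing Implicit Defensive.
Import Order.TTheory GRing.Theory Num.Theory.
Local Open Scope ring_scope.
Local Open Scope classical_set_scope.

Section Profiles.
Variables (R : realType) (n : nat).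
Implicit Types (s b : profile R n) (S : 'I_n -> set R).

Lemma upd_id b i : upd b i (b i) = b.
Proof. by apply: funext => j; rewrite /upd; case: eqP => [->|]. Qed.

Lemma upd_upd b i c c' : upd (upd b i c) i c' = upd b i c'.
Proof. by apply: funext => j; rewrite /upd; case: eqP. Qed.

Lemma in_prof_upd S b i c : in_prof S b -> S i c -> in_prof S (upd b i c).
Proof. by move=> hb hc j; rewrite /upd; case: eqP => [->|]. Qed.

Section CoordinatewiseMonotone.
Variables (S : 'I_n -> set R) (f : profile R n -> R).
Hypothesis f_upd_le : forall s j c,
  in_prof S s -> S j c -> s j <= c -> f s <= f (upd s j c).

Lemma le_prof_mono t u : in_prof S t -> in_prof S u ->
  (forall j, t j <= u j) -> f t <= f u.
Proof.
move=> ht hu htu.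
pose w k : profile R n := fun j => if (j < k)%N then u j else t j.
have wP k : in_prof S (w k) by move=> j; rewrite /w; case: ifP.
suff /(_ n (leqnn n)) : forall k, (k <= n)%N -> f t <= f (w k).
  by have -> : w n = u by apply: funext => j; rewrite /w ltn_ord.
elim=> [_|k IH hk].
  by have -> : w 0%N = t by apply: funext => j; rewrite /w ltn0.
apply: (le_trans (IH (ltnW hk))).
have -> : w k.+1 = upd (w k) (Ordinal hk) (u (Ordinal hk)).
  apply: funext => j; rewrite /w /upd ltnS leq_eqVlt.
  case: (j =P Ordinal hk) => [-> /=|hne]; first by rewrite eqxx.
  by have /negbTE -> : (j != k :> nat) by apply/eqP => e; apply/hne/val_inj.
by apply: f_upd_le => //; rewrite /w ltnn.
Qed.

End CoordinatewiseMonotone.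

Lemma valuation_le S (v : 'I_n -> profile R n -> R) i t u :
  valuations S v -> in_prof S t -> in_prof S u ->
  (forall j, t j <= u j) -> v i t <= v i u.
Proof. by move=> hv; apply: le_prof_mono => s j c /(hv i) [_ + _]; apply. Qed.

Lemma expost_IC_IR_underbid_le S (v : 'I_n -> profile R n -> R)
    (m : mechanism R n) s b i :
  valuations S v -> expost_IC_IR S v m -> in_prof S s -> in_prof S b ->
  (forall j, b j <= s j) ->
  utility v m i b s <= utility v m i (upd b i (s i)) s.
Proof.
move=> hv hic hs hb hbs.
set b' := upd b i (s i).
have hb' : in_prof S b' by apply: in_prof_upd.
have [eq_bi|ne_bi] := eqVneq (b i) (s i); first by rewrite /b' -eq_bi upd_id.
have lt_bi : b i < s i by rewrite lt_neqAle ne_bi hbs.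
have ic_b' : utility v m i b b' <= utility v m i b' b'.
  by move: (hic b' hb' i (b i) (hb i)); rewrite upd_upd upd_id ge_max => /andP[].
have ic_b : utility v m i b' b <= utility v m i b b.
  by move: (hic b hb i (s i) (hs i)); rewrite -/b' ge_max => /andP[].
have v_b'_s : v i b' <= v i s.
  apply: (valuation_le i hv hb' hs) => j.
  by rewrite /b' /upd; case: eqP => [->|].
have v_b_b' : v i b < v i b' by have [_ _] := hv i b hb; apply.
move: ic_b' ic_b v_b'_s v_b_b'; rewrite /utility.
clear; case: (alloc m i b); case: (alloc m i b') => /=; lra.
Qed.

End Profiles.

Lemma integrable_utility (R : realType) (n : nat) (v : 'I_n -> profile R n -> R)
    (d : measure_display) (Omega : measurableType d) (P : probability Omega R)
    (M : Omega -> mechanism R n) i b s :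
  P.-integrable setT (fun w => ((alloc (M w) i b)%:R : R)%:E) ->
  P.-integrable setT (fun w => (pay (M w) i b)%:E) ->
  P.-integrable setT (EFin \o (fun w => utility v (M w) i b s)).
Proof.
move=> hx hp.
apply: (eq_integrable measurableT
  (fun w => (v i s)%:E * ((alloc (M w) i b)%:R : R)%:E - (pay (M w) i b)%:E)%E).
  by move=> w _ /=; rewrite /utility EFinB EFinM muleC.
by apply: integrableB => //; apply: integrableZl.
Qed.

Theorem mainTheorem7 (R : realType) (n : nat) (S : 'I_n -> set R)
  (v : 'I_n -> profile R n -> R)
  (d : measure_display) (Omega : measurableType d)
  (P : probability Omega R) (M : Omega -> mechanism R n) :
  signal_spaces S -> valuations S v ->
  (* universally ex-post IC-IR: a distribution over deterministic
     feasible ex-post IC-IR mechanisms *)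
  (forall w, feasible S (M w) /\ expost_IC_IR S v (M w)) ->
  (* regularity so that the expectations are well defined *)
  (forall i b, P.-integrable setT (fun w => ((alloc (M w) i b)%:R : R)%:E)) ->
  (forall i b, P.-integrable setT (fun w => (pay (M w) i b)%:E)) ->
  forall (s b : profile R n), in_prof S s -> in_prof S b ->
  (forall j, b j <= s j) ->
  forall i : 'I_n,
    Rintegral P setT (fun w => utility v (M w) i b s)
    <= Rintegral P setT (fun w => utility v (M w) i (upd b i (s i)) s).
Proof.
move=> _ hv hM hx hp s b hs hb hbs i.
apply: le_Rintegral => [||| w _]; [exact: measurableT | exact: integrable_utility..|].
exact: expost_IC_IR_underbid_le hv (proj2 (hM w)) hs hb hbs.
Qed.
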